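(* Let $\bm{X},\bm{X}_\star\in\mathbb{R}^{n_1\times r}$ and $\bm{Y},\bm{Y}_\star\in\mathbb{R}^{n_2\times r}$ be arbitrary. Suppose there exists an invertible $\bm{Q}\in\mathbb{R}^{r\times r}$ minimizing $\|\bm{X}\bm{P}-\bm{X}_\star\|_{\mathrm{F}}^2+\|\bm{Y}\bm{P}^{-\top}-\bm{Y}_\star\|_{\mathrm{F}}^2$ over all invertible $\bm{P}\in\mathbb{R}^{r\times r}$. Let $\tilde{\bm{X}}=\bm{X}\bm{Q}$ and $\tilde{\bm{Y}}=\bm{Y}\bm{Q}^{-\top}$. Then \[ \tilde{\bm{X}}^\top(\tilde{\bm{X}}-\bm{X}_\star)=(\tilde{\bm{Y}}-\bm{Y}_\star)^\top\tilde{\bm{Y}}. \]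
   Context: $\bm{P}^{-\top}=(\bm{P}^{-1})^\top$. *)

From HB Require Import structures.
From mathcomp Require Import all_boot all_order all_algebra.
From mathcomp Require Import reals.
Set Implicit Arguments. Unset Strict Implicit. Unset Printing Implicit Defensive.
Import Order.TTheory GRing.Theory Num.Theory.
Local Open Scope ring_scope.

Definition frob2 (R : realType) (m n : nat) (A : 'M[R]_(m, n)) : R :=
  \sum_(i < m) \sum_(j < n) A i j ^+ 2.

Definition bal_obj (R : realType) (n1 n2 r : nat)
  (X Xs : 'M[R]_(n1, r)) (Y Ys : 'M[R]_(n2, r)) (P : 'M[R]_r) : R :=
  frob2 (X *m P - Xs) + frob2 (Y *m (invmx P)^T - Ys).

From HB Require Import structures.
From mathcomp Require Import all_boot all_order all_algebra.
From mathcomp Require Import reals.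
From mathcomp Require Import ring lra.

Set Implicit Arguments.
Unset Strict Implicit.
Unset Printing Implicit Defensive.

Import Order.TTheory GRing.Theory Num.Theory.
Local Open Scope ring_scope.

(* Perturb the minimiser along P = Q (1 + t E) with E = delta_mx a b.  As
   E^2 = [a == b] E, the inverse of 1 + t E is 1 - t / (1 + [a == b] t) E, so
   along this curve the objective is an explicit rational function of t with a
   minimum at t = 0.  Its slope there is twice the difference of the (a, b)
   entries of the two sides of the identity, which must therefore vanish. *)

Lemma slope_eq0_of_ge0 (R : realFieldType) (e c M : R) (K : R -> R) :
  0 < e ->
  (forall t, `|t| <= e -> `|K t| <= M) ->
  (forall t, `|t| <= e -> 0 <= t * (c + t * K t)) ->
  c = 0.
Proof.
move=> e_gt0 K_le_M ge0.
pose m := `|M| + `|c| / e + 1.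
have c_le_me : `|c| <= m * e.
  rewrite /m !mulrDl divfK ?gt_eqF //.
  by have := normr_ge0 M; nra.
have ce_ge0 := divr_ge0 (normr_ge0 c) (ltW e_gt0).
have K_lt_m t : `|t| <= e -> K t < m.
  by move=> /K_le_M; have := ler_norm (K t); have := ler_norm M; rewrite /m; lra.
have m_gt0 : 0 < m by have := normr_ge0 M; rewrite /m; lra.
(* with this t, t (c + t K t) <= - c^2 / (4 m) *)
pose t := - c / (2 * m).
have tm : t * (2 * m) = - c by rewrite /t divfK // mulf_neq0 ?gt_eqF.
have t_small : `|t| <= e.
  have : `|t| * (2 * m) = `|c|.
    by rewrite -[2 * m]gtr0_norm ?mulr_gt0 // -normrM tm normrN.
  by nra.
have := K_lt_m t t_small; have := ge0 t t_small.
move: (K t) => k tk_ge0 k_lt_m; clearbody m t.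
have : 0 <= c ^+ 2 * (k - 2 * m).
  have -> : c ^+ 2 * (k - 2 * m) = (2 * m) ^+ 2 * (t * (c + t * k)).
    by rewrite -[c]opprK -tm; ring.
  by rewrite mulr_ge0 ?sqr_ge0.
move=> c2_mul_ge0; apply/eqP; rewrite -sqrf_eq0 eq_le sqr_ge0 andbT.
by have := sqr_ge0 c; nra.
Qed.

Lemma balanced_slope_eq (R : realFieldType) (al be ga de k : R) :
  0 <= k <= 1 ->
  (forall t, `|t| <= 1 / 2 ->
     0 <= 2 * t * al + t ^+ 2 * be - 2 * (t / (1 + k * t)) * ga
          + (t / (1 + k * t)) ^+ 2 * de) ->
  al = ga.
Proof.
move=> /andP[k_ge0 k_le1] ge0.
have den_gt0 t : `|t| <= 1 / 2 -> 1 / 2 <= 1 + k * t.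
  by rewrite ler_norml => /andP[? ?]; nra.
(* t / (1 + k t) = t - k t^2 / (1 + k t), so the hypothesis reads
   0 <= t (2 (al - ga) + t K t) with K bounded *)
pose K t := be + (2 * k * ga + de / (1 + k * t)) / (1 + k * t).
suff /eqP : 2 * (al - ga) = 0 by rewrite mulf_eq0 pnatr_eq0 subr_eq0 => /eqP.
apply: (@slope_eq0_of_ge0 _ (1 / 2) _ (`|be| + 4 * `|ga| + 4 * `|de|) K).
- lra.
- move=> t /den_gt0 den_ge.
  have w_le2 : `|(1 + k * t)^-1| <= 2.
    rewrite ger0_norm ?invr_ge0; last lra.
    by rewrite -div1r ler_pdivrMr; lra.
  rewrite /K; set w := (1 + k * t)^-1 in w_le2 *.
  rewrite (le_trans (ler_normD _ _)) // -addrA lerD2l normrM.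
  have : `|2 * k * ga + de * w| <= 2 * `|ga| + 2 * `|de|.
    rewrite (le_trans (ler_normD _ _)) // !normrM ger0_norm ?mulr_ge0 //.
    rewrite (ger0_norm k_ge0).
    by have := normr_ge0 ga; have := normr_ge0 de; have := normr_ge0 w; nra.
  by have := normr_ge0 w; have := normr_ge0 (2 * k * ga + de * w); nra.
- move=> t /[dup] /den_gt0 den_ge /ge0.
  suff -> : 2 * t * al + t ^+ 2 * be - 2 * (t / (1 + k * t)) * ga
            + (t / (1 + k * t)) ^+ 2 * de = t * (2 * (al - ga) + t * K t) by [].
  by rewrite /K; field; rewrite gt_eqF //; lra.
Qed.

Definition frob_dot (R : pzRingType) (m n : nat) (A B : 'M[R]_(m, n)) : R :=
  \sum_(i < m) \sum_(j < n) A i j * B i j.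

Lemma frob2DZ (R : realType) (m n : nat) (A B : 'M[R]_(m, n)) (c : R) :
  frob2 (A + c *: B) = frob2 A + 2 * c * frob_dot A B + c ^+ 2 * frob2 B.
Proof.
rewrite /frob2 /frob_dot !mulr_sumr -!big_split; apply: eq_bigr => i _ /=.
rewrite !mulr_sumr -!big_split; apply: eq_bigr => j _ /=.
by rewrite !mxE; ring.
Qed.

Lemma mulmx_delta_entry (R : pzRingType) (m n p : nat) (B : 'M[R]_(m, n))
    (a : 'I_n) (b : 'I_p) i j :
  (B *m delta_mx a b) i j = B i a * (j == b)%:R.
Proof.
rewrite mxE (bigD1 a) //= big1 ?addr0; first by rewrite mxE eqxx.
by move=> k /negbTE k_neq_a; rewrite mxE k_neq_a mulr0.
Qed.

Lemma frob_dot_mulmx_delta (R : comPzRingType) (m n p : nat)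
    (A : 'M[R]_(m, p)) (B : 'M[R]_(m, n)) (a : 'I_n) (b : 'I_p) :
  frob_dot A (B *m delta_mx a b) = (B^T *m A) a b.
Proof.
rewrite /frob_dot mxE; apply: eq_bigr => i _.
rewrite (bigD1 b) //= big1 ?addr0 => [|j /negbTE j_neq_b].
  by rewrite mulmx_delta_entry eqxx mulr1 mxE mulrC.
by rewrite mulmx_delta_entry j_neq_b !mulr0.
Qed.

Lemma mulmx_1DZ_idem (R : fieldType) (n : nat) (E : 'M[R]_n) (k t : R) :
  E *m E = k *: E -> 1 + k * t != 0 ->
  (1%:M + t *: E) *m (1%:M - (t / (1 + k * t)) *: E) = 1%:M.
Proof.
move=> EE den_neq0.
rewrite mulmxDl mulmxBr mulmxBr !mul1mx mulmx1 -scalemxAl -scalemxAr EE.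
by apply/matrixP => i j; rewrite !mxE; field.
Qed.

Lemma invmx_mulmx_rinv (R : comUnitRingType) (n : nat) (Q A B : 'M[R]_n) :
  Q \in unitmx -> A *m B = 1%:M ->
  Q *m A \in unitmx /\ invmx (Q *m A) = B *m invmx Q.
Proof.
move=> Q_unit AB1; have [A_unit _] := mulmx1_unit AB1.
have QA_unit : Q *m A \in unitmx by rewrite unitmx_mul Q_unit.
have QAB1 : Q *m A *m (B *m invmx Q) = 1%:M.
  by rewrite mulmxA -(mulmxA Q) AB1 mulmx1 mulmxV.
by split=> //; rewrite -[LHS]mulmx1 -QAB1 mulKmx.
Qed.

Lemma bal_obj_mulmx (R : realType) (n1 n2 r : nat) (X Xs : 'M[R]_(n1, r))
    (Y Ys : 'M[R]_(n2, r)) (Q A B : 'M[R]_r) :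
  Q \in unitmx -> A *m B = 1%:M ->
  bal_obj X Xs Y Ys (Q *m A)
  = frob2 (X *m Q *m A - Xs) + frob2 (Y *m (invmx Q)^T *m B^T - Ys).
Proof.
move=> Q_unit AB1; have [_ QA_inv] := invmx_mulmx_rinv Q_unit AB1.
by rewrite /bal_obj QA_inv trmx_mul !mulmxA.
Qed.

Theorem lemma2 (R : realType) (n1 n2 r : nat)
  (X Xs : 'M[R]_(n1, r)) (Y Ys : 'M[R]_(n2, r)) (Q : 'M[R]_r) :
  Q \in unitmx ->
  (forall P : 'M[R]_r, P \in unitmx ->
     bal_obj X Xs Y Ys Q <= bal_obj X Xs Y Ys P) ->
  let Xt := X *m Q in
  let Yt := Y *m (invmx Q)^T in
  Xt^T *m (Xt - Xs) = (Yt - Ys)^T *m Yt.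
Proof.
move=> Q_unit Q_min Xt Yt; apply/matrixP => a b.
pose E : 'M[R]_r := delta_mx a b; pose k : R := (a == b)%:R.
have EE : E *m E = k *: E by rewrite mul_delta_mx_cond scaler_nat eq_sym.
have -> : ((Yt - Ys)^T *m Yt) a b = (((Yt - Ys)^T *m Yt)^T) b a by rewrite [RHS]mxE.
rewrite [in RHS]trmx_mul trmxK -!frob_dot_mulmx_delta -[delta_mx b a]trmx_delta -/E.
have k01 : 0 <= k <= 1 by rewrite /k; case: (a == b); rewrite ?lexx ?ler01.
apply: (balanced_slope_eq (be := frob2 (Xt *m E)) (de := frob2 (Yt *m E^T)) k01).
move=> t t_small; set u := t / (1 + k * t).
have den_neq0 : 1 + k * t != 0.
  move: k01 t_small; rewrite ler_norml => /andP[? ?] /andP[? ?].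
  by rewrite gt_eqF //; nra.
have AB1 := mulmx_1DZ_idem EE den_neq0.
have [P_unit _] := invmx_mulmx_rinv Q_unit AB1.
have := Q_min _ P_unit; rewrite (bal_obj_mulmx _ _ _ _ Q_unit AB1) /bal_obj -/Xt -/Yt.
have -> : Xt *m (1%:M + t *: E) - Xs = (Xt - Xs) + t *: (Xt *m E).
  by rewrite mulmxDr mulmx1 -scalemxAr addrAC.
have -> : Yt *m (1%:M - u *: E)^T - Ys = (Yt - Ys) + (- u) *: (Yt *m E^T).
  by rewrite linearB /= trmx1 linearZ /= mulmxBr mulmx1 -scalemxAr scaleNr addrAC.
by rewrite !frob2DZ sqrrN; lra.
Qed.
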